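(* Let $p$ be an odd prime and let $X$ be a finite family of $4p-3$ lattice points in $\mathbb{Z}^2$ (repetitions allowed). Then (a) $-1+(p,X)-(2p,X)+(3p,X)\equiv 0 \pmod p$, and (b) $(p-1,X)-(2p-1,X)+(3p-1,X)\equiv 0 \pmod p$.
   Context: For a finite family $X$ of lattice points in $\mathbb{Z}^2$ (points may repeat; subsets are subfamilies, i.e. subsets of the index set) and an integer $n\ge 0$, $(n,X)$ denotes the number of $n$-element subfamilies of $X$ whose coordinatewise sum is congruent to $(0,0)$ modulo $p$. *)

From mathcomp Require Import all_boot all_order all_algebra.
Set Implicit Arguments. Unset Strict Implicit. Unset Printing Implicit Defensive.
Import GRing.Theory Num.Theory.
Local Open Scope ring_scope.

(* A finite family of N lattice points in Z^2 is a map X : 'I_N -> int * int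
   (repetitions allowed; subfamilies = subsets of the index set 'I_N).
   subfam_count p n X = (n, X): the number of n-element subsets S of the
   index set whose coordinatewise sum is congruent to (0,0) modulo p. *)
Definition subfam_count (p n N : nat) (X : 'I_N -> int * int) : nat :=
  #|[set S : {set 'I_N} |
      [&& #|S| == n,
          (p%:Z %| \sum_(i in S) (X i).1)%Z &
          (p%:Z %| \sum_(i in S) (X i).2)%Z]]|.

From mathcomp Require Import all_boot all_order all_algebra finfield.
From mathcomp Require Import zify ring.
Import GRing.Theory Num.Theory.
Local Open Scope ring_scope.
Set Implicit Arguments. Unset Strict Implicit.

(* A Chevalley-Warning argument on the subsets [S] of the index set [I].
   Seen as a function of the indicator vector of [S], the product of the
   indicators of [p | #|S| + e], [p | sum_S x] and [p | sum_S y] is, by Fermat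
   ([t == 0] = 1 - t^(p-1) in F_p), a multilinear polynomial of degree at most
   3(p-1) < 4p-3 = #|I|, and the signed sum of [(-1)^#|S| f S] over all [S]
   kills every multilinear monomial of degree less than #|I|.  Grouping the
   sets by size, only the sizes with #|S| + e = q p, q < 4, survive, and
   since p is odd their sign is (-1)^(q+e).  The case e = 0 gives (a), the
   empty family accounting for the 1, and e = 1 gives (b). *)

Lemma sumr_pred1_natl (I : finType) (R : pzSemiRingType) (a : I) (y : I -> R) :
  \sum_i (i == a)%:R * y i = y a.
Proof.
under eq_bigr => i _ do rewrite mulr_natl mulrb.
by rewrite -big_mkcond big_pred1_eq.
Qed.

Lemma sumr_natr_bool (T : finType) (R : pzSemiRingType) (P : pred T) :
  \sum_t (P t)%:R = #|[set t | P t]|%:R :> R.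
Proof.
rewrite -natr_sum -sum1_card; congr _%:R; rewrite [RHS]big_mkcond.
by apply: eq_bigr => t _; rewrite inE.
Qed.

Section MultilinearDegree.
Variables (I : finType) (R : comNzRingType).

(* A set function [g] is viewed as a function of the indicator vector of [S];
   the monomial [prod_(i in T) x_i] then evaluates to [T \subset S], so
   [mdeg_le d g] says that [g] is a multilinear polynomial of degree <= d. *)
Definition mdeg_le (d : nat) (g : {set I} -> R) :=
  exists F : {set I} -> R, (forall T : {set I}, (d < #|T|)%N -> F T = 0) /\
   forall S : {set I}, g S = \sum_(T : {set I}) F T * (T \subset S)%:R.

Lemma mdeg_le_ext d g h : g =1 h -> mdeg_le d g -> mdeg_le d h.
Proof. by move=> e [F [hF hg]]; exists F; split => // S; rewrite -e hg. Qed.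

Lemma mdeg_le_cst d c : mdeg_le d (fun _ => c).
Proof.
exists (fun T => (T == set0)%:R * c); split.
  by move=> T; case: eqP => [->|]; rewrite ?cards0 ?mul0r.
move=> S; under eq_bigr => T _ do rewrite -mulrA.
by rewrite sumr_pred1_natl sub0set mulr1.
Qed.

Lemma mdeg_leD d g h : mdeg_le d g -> mdeg_le d h -> mdeg_le d (fun S => g S + h S).
Proof.
move=> [F [hF hg]] [G [hG hh]]; exists (fun T => F T + G T); split.
  by move=> T hT; rewrite hF ?hG ?addr0.
by move=> S; rewrite hg hh -big_split; apply: eq_bigr => T _; rewrite mulrDl.
Qed.

Lemma mdeg_leN d g : mdeg_le d g -> mdeg_le d (fun S => - g S).
Proof.
move=> [F [hF hg]]; exists (fun T => - F T); split.
  by move=> T hT; rewrite hF ?oppr0.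
by move=> S; rewrite hg -sumrN; apply: eq_bigr => T _; rewrite mulNr.
Qed.

Lemma mdeg_leM d e g h : mdeg_le d g -> mdeg_le e h ->
  mdeg_le (d + e)%N (fun S => g S * h S).
Proof.
move=> [F [hF hg]] [G [hG hh]].
exists (fun V => \sum_T \sum_U (V == T :|: U)%:R * (F T * G U)); split.
  move=> V hV; apply: big1 => T _; apply: big1 => U _.
  case: eqP => [eV|]; last by rewrite mul0r.
  have hTU : (d + e < #|T| + #|U|)%N.
    by apply: leq_trans hV _; rewrite eV cardsU leq_subr.
  case: (ltnP d #|T|) => [hT | hT]; first by rewrite hF // mul0r mulr0.
  by rewrite hG ?mulr0 //; lia.
move=> S; rewrite hg hh big_distrlr /=.
under [RHS]eq_bigr => V _ do rewrite mulr_suml.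
rewrite [RHS]exchange_big; apply: eq_bigr => T _.
under [RHS]eq_bigr => V _ do rewrite mulr_suml.
rewrite [RHS]exchange_big; apply: eq_bigr => U _.
under [RHS]eq_bigr => V _ do rewrite -mulrA.
by rewrite sumr_pred1_natl subUset -mulnb natrM mulrACA.
Qed.

Lemma mdeg_leX d g k : mdeg_le d g -> mdeg_le (d * k)%N (fun S => g S ^+ k).
Proof.
move=> dg; elim: k => [|k IHk].
  by apply: mdeg_le_ext (mdeg_le_cst _ 1) => S; rewrite expr0.
by rewrite mulnS; apply: mdeg_le_ext (mdeg_leM dg IHk) => S; rewrite exprS.
Qed.

Lemma mdeg_le_lin (c : I -> R) : mdeg_le 1 (fun S => \sum_(i in S) c i).
Proof.
exists (fun T => \sum_i (T == [set i])%:R * c i); split.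
  move=> T hT; apply: big1 => i _.
  by case: eqP hT => [->|_ _]; rewrite ?cards1 ?mul0r.
move=> S; under [RHS]eq_bigr => T _ do rewrite mulr_suml.
rewrite [RHS]exchange_big big_mkcond; apply: eq_bigr => i _.
under [RHS]eq_bigr => T _ do rewrite -mulrA.
by rewrite sumr_pred1_natl sub1set mulr_natr mulrb.
Qed.

Lemma sum_sign_supset_eq0 (T : {set I}) : T != setT ->
  \sum_(S : {set I}) (-1) ^+ #|S| * (T \subset S)%:R = 0 :> R.
Proof.
rewrite -subTset => /subsetPn [i _ iNT].
have subT_U1 S : (T \subset i |: S) = (T \subset S).
  apply/idP/idP => [/subsetP sTiS|sTS]; last exact: subset_trans sTS (subsetU1 _ _).
  apply/subsetP => x xT; have := sTiS x xT; rewrite in_setU1.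
  by case: eqP => [xi|//]; rewrite -xi xT in iNT.
(* Adding [i] is a sign-reversing bijection from the sets avoiding [i] onto
   those containing it. *)
rewrite (bigID (fun S : {set I} => i \in S)) /=.
rewrite (reindex_onto (fun S : {set I} => i |: S) (fun S : {set I} => S :\ i)) /=;
  last by move=> S iS; rewrite setD1K.
apply/eqP; rewrite addr_eq0 -sumrN; apply/eqP/eq_big => S.
  rewrite setU11 /=; apply/eqP/idP => [<-|iNS]; first by rewrite setD11.
  by rewrite setU1K.
case/andP=> _ /eqP eS; have iNS : i \notin S by rewrite -eS setD11.
by rewrite cardsU1 iNS exprS mulN1r mulNr subT_U1.
Qed.

Lemma sum_sign_mdeg_le_eq0 d g : mdeg_le d g -> (d < #|I|)%N ->
  \sum_(S : {set I}) (-1) ^+ #|S| * g S = 0.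
Proof.
move=> [F [hF hg]] ltdI.
under eq_bigr => S _ do rewrite hg mulr_sumr.
rewrite exchange_big /=; apply: big1 => T _.
case: (eqVneq T setT) => [->|nT].
  by apply: big1 => S _; rewrite hF ?cardsT // mul0r mulr0.
under eq_bigr => S _ do rewrite mulrCA.
by rewrite -mulr_sumr sum_sign_supset_eq0 ?mulr0.
Qed.

End MultilinearDegree.

Definition zero_sum_mod (p : nat) (I : finType) (X : I -> int * int) (S : {set I}) :=
  (p%:Z %| \sum_(i in S) (X i).1)%Z && (p%:Z %| \sum_(i in S) (X i).2)%Z.

Section ChevalleyWarning.
Variables (p : nat) (p_pr : prime p).

Lemma Fp_eq0_indicator (x : 'F_p) : (x == 0)%:R = 1 - x ^+ p.-1.
Proof.
have p1_gt0 : (0 < p.-1)%N by have := prime_gt1 p_pr; lia.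
have [->|x_neq0] := eqVneq x 0; first by rewrite expr0n eqn0Ngt p1_gt0 subr0.
suff -> : x ^+ p.-1 = 1 by rewrite subrr.
apply: (mulfI x_neq0); rewrite -exprS prednK ?prime_gt0 // mulr1.
by have := expf_card x; rewrite card_Fp.
Qed.

Lemma mdeg_le_affine_eq0 (I : finType) (c : I -> 'F_p) (z : 'F_p) :
  mdeg_le p.-1 (fun S : {set I} => (\sum_(i in S) c i + z == 0)%:R : 'F_p).
Proof.
have := mdeg_leX p.-1 (mdeg_leD (mdeg_le_lin c) (mdeg_le_cst I 1 z)).
rewrite mul1n => /mdeg_leN /(mdeg_leD (mdeg_le_cst I p.-1 1)).
by apply: mdeg_le_ext => S; rewrite Fp_eq0_indicator.
Qed.

Lemma sum_sign_zero_sum_eq0 (I : finType) (X : I -> int * int) (e : nat) :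
  (3 * p.-1 < #|I|)%N ->
  \sum_(S : {set I}) (-1) ^+ #|S| * ((p %| #|S| + e)%N && zero_sum_mod p X S)%:R
    = 0 :> 'F_p.
Proof.
move=> ltI; pose pcharFp := pchar_Fp p_pr.
have deg3 := mdeg_leM (mdeg_leM (mdeg_le_affine_eq0 (fun=> 1) e%:R)
  (mdeg_le_affine_eq0 (fun i => (X i).1%:~R) 0))
  (mdeg_le_affine_eq0 (fun i => (X i).2%:~R) 0).
rewrite -[RHS](sum_sign_mdeg_le_eq0 deg3); last lia.
apply: eq_bigr => S _; congr (_ * _).
rewrite /zero_sum_mod !addr0 sumr_const -natrD -!rmorph_sum.
by rewrite -(dvdn_pcharf pcharFp) -!(dvdz_pcharf pcharFp) -!mulnb !natrM mulrA.
Qed.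

End ChevalleyWarning.

Lemma sign_dvdn_sum (R : pzRingType) (p m k e : nat) : odd p -> (k + e < m * p)%N ->
  (-1) ^+ k * (p %| k + e)%N%:R
    = \sum_(q < m) (-1) ^+ (q + e)%N * (k + e == q * p)%N%:R :> R.
Proof.
move=> p_odd lt_ke; have p_gt0 := odd_gt0 p_odd.
have [/dvdnP [c def_ke] | ndvd] := boolP (p %| k + e)%N; last first.
  rewrite mulr0 big1 // => q _; case: eqP => [ke|_]; last by rewrite mulr0.
  by rewrite ke dvdn_mull in ndvd.
have lt_cm : (c < m)%N by rewrite -(ltn_pmul2r p_gt0) -def_ke.
rewrite (bigD1 (Ordinal lt_cm)) //= def_ke eqxx big1 ?addr0 ?mulr1; last first.
  move=> q q_neq; have /negbTE c_neq : c != q by rewrite eq_sym.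
  by rewrite eqn_pmul2r // c_neq mulr0.
rewrite -signr_odd -[RHS]signr_odd; congr (_ ^+ _).
by have := congr1 odd def_ke; rewrite !oddD oddM p_odd andbT => <-; rewrite addbK.
Qed.

Lemma sum_sign_card (I : finType) (R : pzRingType) (P : pred {set I}) (p m e : nat) :
  odd p -> (#|I| + e < m * p)%N ->
  \sum_(S : {set I}) (-1) ^+ #|S| * ((p %| #|S| + e)%N && P S)%:R
    = \sum_(q < m) (-1) ^+ (q + e)%N
        * #|[set S : {set I} | (#|S| + e == q * p)%N && P S]|%:R :> R.
Proof.
move=> p_odd ltI.
rewrite (eq_bigr (fun S : {set I} =>
  \sum_(q < m) (-1) ^+ (q + e)%N * ((#|S| + e == q * p)%N && P S)%:R)); last first.
  move=> S _; rewrite -mulnb natrM mulrA (sign_dvdn_sum _ (m := m) p_odd); last first.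
    by apply: leq_ltn_trans ltI; rewrite leq_add2r max_card.
  by rewrite mulr_suml; apply: eq_bigr => q _; rewrite -mulrA -natrM mulnb.
by rewrite exchange_big; apply: eq_bigr => q _; rewrite -mulr_sumr sumr_natr_bool.
Qed.

Lemma subfam_count_shift (p N e m : nat) (X : 'I_N -> int * int) : (e <= m)%N ->
  #|[set S : {set 'I_N} | (#|S| + e == m)%N && zero_sum_mod p X S]|
    = subfam_count p (m - e) X.
Proof.
move=> le_em; apply: eq_card => S; rewrite !inE; congr (_ && _).
by apply/eqP/eqP; lia.
Qed.

Lemma card_shift_lt (I : finType) (P : pred {set I}) (e m : nat) : (m < e)%N ->
  #|[set S : {set I} | (#|S| + e == m)%N && P S]| = 0%N.
Proof.
move=> lt_me; apply/eqP; rewrite cards_eq0; apply/eqP/setP => S.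
by rewrite !inE; case: eqP => //; lia.
Qed.

Lemma subfam_count0 (p N : nat) (X : 'I_N -> int * int) : subfam_count p 0 X = 1%N.
Proof.
rewrite /subfam_count (_ : [set S | _] = [set set0]) ?cards1 //.
apply/setP => S; rewrite !inE cards_eq0; case: eqP => [->|] //=.
by rewrite !big_set0 !dvdz0.
Qed.

Theorem corollary5 (p : nat) (hp : prime p) (hodd : odd p)
    (X : 'I_(4 * p - 3) -> int * int) :
  (p%:Z %| (-1 + (subfam_count p p X)%:Z - (subfam_count p (2 * p) X)%:Z
              + (subfam_count p (3 * p) X)%:Z))%Z /\
  (p%:Z %| ((subfam_count p (p - 1) X)%:Z - (subfam_count p (2 * p - 1) X)%:Z
              + (subfam_count p (3 * p - 1) X)%:Z))%Z.
Proof.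
have p_gt1 := prime_gt1 hp.
have signed_count_eq0 e : (e <= 1)%N ->
  \sum_(q < 4) (-1) ^+ (q + e)%N
     * #|[set S : {set 'I_(4 * p - 3)} | (#|S| + e == q * p)%N && zero_sum_mod p X S]|%:R
    = 0 :> 'F_p.
  move=> le_e1; rewrite -sum_sign_card // ?sum_sign_zero_sum_eq0 ?card_ord //; lia.
rewrite !(dvdz_pcharf (pchar_Fp hp)) !(intrD, intrN, intrB) -!pmulrn; split; apply/eqP.
- have := signed_count_eq0 0%N isT.
  rewrite !big_ord_recr big_ord0 /= !subfam_count_shift // !subn0 subfam_count0.
  by rewrite mul1n => h; rewrite -[RHS]oppr0 -h; ring.
- have := signed_count_eq0 1%N isT.
  rewrite !big_ord_recr big_ord0 /= card_shift_lt // !subfam_count_shift; try lia.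
  by rewrite mul1n => h; rewrite -[RHS]h; ring.
Qed.
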